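(* There is an absolute constant $K$ such that for every integer $c \ge 0$, the minimal Fibonacci-DFAO generating the sequence $(t(i+c))_{i \ge 0}$ has at most $K(c+1)$ states, where $t(i)$ is the number of $1$s in the canonical Fibonacci (Zeckendorf) representation of $i$, taken modulo $2$.
   Context: The canonical Fibonacci representation of $i \ge 0$ is the unique binary word $x$ without leading zeros and with no factor $11$ such that $i = [x] := \sum_{j=1}^{\ell} x_j F_{\ell-j+2}$ where $x = x_1\cdots x_\ell$ and $F_0=0,F_1=1,F_k=F_{k-1}+F_{k-2}$. A Fibonacci-DFAO reads valid Fibonacci representations (no factor $11$, leading zeros allowed, output independent of leading zeros) most significant digit first, and generates $(s(i))$ if its output on every representation of $i$ is $s(i)$. *)

From mathcomp Require Import all_boot.
Set Implicit Arguments. Unset Strict Implicit. Unset Printing Implicit Defensive.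

Fixpoint fib (n : nat) : nat :=
  match n with
  | 0 => 0
  | 1 => 1
  | (m.+1 as p).+1 => fib p + fib m
  end.

(* Value [x] = sum_{j=1}^{l} x_j F_{l-j+2} of a word x = x_1 ... x_l
   (most significant digit first).  With 0-based index j this is
   x_j * F_{l-j+1}. *)
Definition fibval (x : seq bool) : nat :=
  \sum_(j < size x) (nth false x j) * fib (size x - j + 1).

Definition fib_valid (x : seq bool) : bool := ~~ infix [:: true; true] x.

Definition fib_canonical (x : seq bool) : bool :=
  fib_valid x && (if x is b :: _ then b else true).

Definition is_fib_thue_morse (t : nat -> bool) : Prop :=
  forall x, fib_canonical x -> t (fibval x) = odd (count id x).

Definition fib_dfao_generates (Q : finType) (q0 : Q) (d : Q -> bool -> Q)
    (O : Type) (out : Q -> O) (s : nat -> O) : Prop :=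
  forall w : seq bool, fib_valid w -> out (foldl d q0 w) = s (fibval w).

From mathcomp Require Import all_boot zify.

(* Let the defect of a valid word y be t([y] + c) + |y|_1 mod 2, so that on input w the
   required output t([w] + c) is the parity of |w|_1 plus the defect of w.  It therefore
   suffices to remember that parity together with a short word r such that every valid
   extension of w has the same defect as the corresponding extension of r.  Adding c <= F_k
   to a word ending in 0y, with y long enough, never carries across that 0, so only the
   last k + 2 digits matter; the one exception is a block 1010, into which a carry can run,
   but 1010s is interchangeable with s.  Storing the parity and the value of a window of
   k + 2 digits takes 2(F_(k+4) + 1) states, which is O(c) when F_(k-1) < c <= F_k. *)

Set Implicit Arguments.
Unset Strict Implicit.
Unset Printing Implicit Defensive.

Lemma fibSS n : fib n.+2 = fib n.+1 + fib n. Proof. by []. Qed.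

Arguments fib : simpl never.

Lemma fib_leS n : fib n <= fib n.+1.
Proof. by case: n => [|n] //; rewrite fibSS leq_addr. Qed.

Lemma fib_mono : {homo fib : m n / m <= n}.
Proof. exact: homo_leq leqnn leq_trans fib_leS. Qed.

Lemma fib_gt0 n : 0 < fib n.+1.
Proof. exact: fib_mono 1 n.+1 _. Qed.

Lemma leq_fibS n : n <= fib n.+1.
Proof.
elim: n => [|[|n] IH] //; rewrite fibSS.
by have := fib_gt0 n; lia.
Qed.

Lemma fibval_nil : fibval [::] = 0. Proof. by rewrite /fibval big_ord0. Qed.

Lemma fibval_cons b r : fibval (b :: r) = b * fib (size r).+2 + fibval r.
Proof. by rewrite /fibval /= big_ord_recl subn0 addn1. Qed.

Lemma fibval_cat_swap a y z : size y = size z ->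
  fibval (a ++ y) + fibval z = fibval (a ++ z) + fibval y.
Proof.
move=> eq_yz; elim: a => [|b a IH] /=; first by rewrite addnC.
by rewrite !fibval_cons !size_cat eq_yz; lia.
Qed.

Lemma fib_valid_cons b s :
  fib_valid (b :: s) = ~~ (b && head false s) && fib_valid s.
Proof.
rewrite /fib_valid infix_consl negb_or; congr (~~ _ && _).
by case: b; case: s => [|[] s]; rewrite /= ?prefix0s.
Qed.

Lemma fib_valid_catr a s : fib_valid (a ++ s) -> fib_valid s.
Proof. by elim: a => [|b a IH] //= /[!fib_valid_cons] /andP[_ /IH]. Qed.

Lemma fib_valid_catl a s : fib_valid (a ++ s) -> fib_valid a.
Proof.
elim: a => [|b a IH] //=; rewrite !fib_valid_cons => /andP[b_a /IH ->].
by case: a {IH} b_a => [|b' a] /=; rewrite andbT ?andbF.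
Qed.

Lemma fib_valid_cat0 a s : fib_valid a -> fib_valid s -> fib_valid (a ++ false :: s).
Proof.
move=> va vs; elim: a va => [|b a IH] /=; first by rewrite fib_valid_cons vs.
rewrite !fib_valid_cons => /andP[b_a /IH ->].
by case: a {IH} b_a => [|b' a] /=; rewrite andbT.
Qed.

Lemma fib_valid_nseq0 n : fib_valid (nseq n false).
Proof. by elim: n. Qed.

Lemma fibval_lt z : fib_valid z -> fibval z < fib (size z).+2.
Proof.
suff lt_z : fib_valid z -> fibval z < fib (size z).+2 /\
    (head false z = false -> fibval z < fib (size z).+1) by case/lt_z.
elim: z => [|b r IH]; first by rewrite fibval_nil.
rewrite fib_valid_cons fibval_cons => /andP[b_r /IH[lt_r lt_r0]].
change (size (b :: r)) with (size r).+1; change (head false (b :: r)) with b.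
rewrite (fibSS (size r).+1).
case: b b_r => [/negbTE/lt_r0 lt_r'|_]; first by split=> //; rewrite mul1n; lia.
by split=> //; rewrite mul0n add0n (leq_trans lt_r) ?fib_leS.
Qed.

Fixpoint zeckendorf (m V : nat) : seq bool :=
  if m is m'.+1 then
    if fib m'.+2 <= V then true :: zeckendorf m' (V - fib m'.+2)
    else false :: zeckendorf m' V
  else [::].

Lemma zeckendorfS m V : zeckendorf m.+1 V =
  if fib m.+2 <= V then true :: zeckendorf m (V - fib m.+2) else false :: zeckendorf m V.
Proof. by []. Qed.

Lemma zeckendorfP m V : V < fib m.+2 ->
  [/\ fib_valid (zeckendorf m V), size (zeckendorf m V) = m & fibval (zeckendorf m V) = V].
Proof.
elim: m V => [|m IH] V lt_V.
  by move: lt_V; rewrite ltnS leqn0 => /eqP ->; split; rewrite //= fibval_nil.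
rewrite zeckendorfS; case: leqP => [le_V | lt_V'].
  have lt_V' : V - fib m.+2 < fib m.+1 by move: lt_V; rewrite fibSS; lia.
  have [vz sz val_z] := IH _ (leq_trans lt_V' (fib_leS _)).
  split; rewrite ?fibval_cons /= ?sz ?val_z; [|by []|lia].
  rewrite fib_valid_cons vz andbT.
  case: m {IH le_V lt_V vz sz val_z} lt_V' => [|m] //.
  by move=> lt_V; rewrite zeckendorfS leqNgt lt_V.
have [vz sz val_z] := IH _ lt_V'.
by split; rewrite ?fibval_cons /= ?sz ?val_z // fib_valid_cons vz andbT.
Qed.

Lemma fibval_inj z1 z2 : fib_valid z1 -> fib_valid z2 -> size z1 = size z2 ->
  fibval z1 = fibval z2 -> z1 = z2.
Proof.
elim: z1 z2 => [|b1 r1 IH] [|b2 r2] //= /[!fib_valid_cons].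
move=> /andP[_ v1] /andP[_ v2] [eq_sz]; rewrite !fibval_cons eq_sz.
have := fibval_lt v1; have := fibval_lt v2; rewrite eq_sz.
case: b1; case: b2 => lt2 lt1 eq_val; rewrite ?mul1n ?mul0n in eq_val; try lia;
  by rewrite (IH r2) //; lia.
Qed.

Lemma fib_thue_morse_valid t x : is_fib_thue_morse t -> fib_valid x ->
  t (fibval x) = odd (count id x).
Proof.
move=> tm; elim: x => [|[] r IH] vx; first exact: tm.
  by apply: tm; rewrite /fib_canonical vx.
by move: vx; rewrite fibval_cons mul0n add0n fib_valid_cons => /IH.
Qed.

Section Shift.

Variables (t : nat -> bool) (c : nat).
Hypothesis tm : is_fib_thue_morse t.

Definition shift_defect (y : seq bool) : bool := t (fibval y + c) (+) odd (count id y).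

Definition replaces (w r : seq bool) : Prop := forall x, fib_valid (w ++ x) ->
  fib_valid (r ++ x) /\ shift_defect (w ++ x) = shift_defect (r ++ x).

Lemma replaces_trans u v w : replaces u v -> replaces v w -> replaces u w.
Proof.
move=> uv vw x /uv[/vw[vx eq_vw] eq_uv]; split=> //; congruence.
Qed.

Lemma replaces_rcons w r b : replaces w r -> replaces (rcons w b) (rcons r b).
Proof. by move=> wr x; rewrite -!cats1 -!catA; apply: wr. Qed.

Lemma shift_defect_cons0 y : shift_defect (false :: y) = shift_defect y.
Proof. by rewrite /shift_defect fibval_cons mul0n. Qed.

Lemma replaces_drop0 y : replaces (false :: y) y.
Proof. by move=> x /=; rewrite shift_defect_cons0 fib_valid_cons => /andP[]. Qed.

Lemma replaces_add0 y : replaces y (false :: y).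
Proof. by move=> x vyx /=; rewrite shift_defect_cons0 fib_valid_cons vyx. Qed.

Lemma replaces_nil_nseq0 n : replaces [::] (nseq n false).
Proof.
elim: n => [|n IH]; first by [].
exact: replaces_trans IH (@replaces_add0 _).
Qed.

Lemma shift_defect_witness y z : fib_valid z -> fibval z = fibval y + c ->
  shift_defect y = odd (count id z) (+) odd (count id y).
Proof. by move=> vz val_z; rewrite /shift_defect -val_z fib_thue_morse_valid. Qed.

Lemma shift_defect_cat0 a y : fib_valid (a ++ false :: y) ->
  fibval y + c < fib (size y).+2 -> shift_defect (a ++ false :: y) = shift_defect y.
Proof.
move=> v lt_yc.
have va : fib_valid a := fib_valid_catl v.
have vy : fib_valid y by move: v; rewrite -cat_rcons => /fib_valid_catr.
have [vz sz val_z] := zeckendorfP lt_yc.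
set z := zeckendorf _ _ in vz sz val_z.
have vaz : fib_valid (a ++ false :: z) by apply: fib_valid_cat0.
have val_az : fibval (a ++ false :: z) = fibval (a ++ false :: y) + c.
  have /= := @fibval_cat_swap a (false :: z) (false :: y).
  by rewrite sz !fibval_cons !mul0n !add0n val_z => /(_ erefl); lia.
rewrite (shift_defect_witness vaz val_az) (shift_defect_witness vz val_z).
rewrite !count_cat /= ?add0n !oddD.
by case: (odd (count id a)); case: (odd (count id z)); case: (odd (count id y)).
Qed.

Lemma replaces_cat00 a s : c <= fib (size s).+1 ->
  replaces (a ++ [:: false, false & s]) (false :: s).
Proof.
move=> le_c x; rewrite -catA !cat_cons => v.
have v0sx : fib_valid (false :: s ++ x) by move: v; rewrite -cat_rcons => /fib_valid_catr.
split=> //; apply: shift_defect_cat0 => //.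
have vsx : fib_valid (s ++ x) by move: v0sx; rewrite fib_valid_cons.
have le_c' : c <= fib (size (s ++ x)).+1.
  by rewrite (leq_trans le_c) ?fib_mono ?size_cat ?ltnS ?leq_addr.
have := fibval_lt vsx; rewrite fibval_cons mul0n add0n /= (fibSS (size _).+1); lia.
Qed.

(* With b :: r the Zeckendorf word of [s] + c, the word 1010s + c is 10000r if b = 1
   and 01010r if b = 0, in both cases with as many ones as b :: r modulo 2. *)
Lemma shift_defect_1010 s : fib_valid s -> c <= fib (size s).+1 ->
  shift_defect [:: true, false, true, false & s] = shift_defect s.
Proof.
move=> vs le_c; have lt_V : fibval s + c < fib (size s).+3.
  by have := fibval_lt vs; rewrite (fibSS (size s).+1); lia.
have [vz sz val_z] := zeckendorfP lt_V; rewrite (shift_defect_witness vz val_z).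
case: (zeckendorf _ _) vz sz val_z => [|b r] //; rewrite fib_valid_cons fibval_cons.
move=> /andP[_ vr] [sr] val_z.
pose z' := if b then [:: true, false, false, false, false & r]
           else [:: false, true, false, true, false & r].
have vz' : fib_valid z' by rewrite /z'; case: b {val_z z'}; rewrite !fib_valid_cons vr.
have val_z' : fibval z' = fibval [:: true, false, true, false & s] + c.
  have := fibSS (size s).+4; have := fibSS (size s).+3; have := fibSS (size s).+2.
  move: val_z; rewrite /z'.
  by case: b {vz' z'}; rewrite !fibval_cons /= sr ?mul1n ?mul0n; lia.
rewrite (shift_defect_witness vz' val_z') /z'.
by case: b {vz' val_z' val_z z'}; rewrite /= ?add0n ?oddS; case: (odd _); case: (odd _).
Qed.

Lemma replaces_1010 s : c <= fib (size s).+1 -> replaces [:: true, false, true, false & s] s.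
Proof.
move=> le_c x v.
have vsx : fib_valid (s ++ x) by apply: (@fib_valid_catr [:: true; false; true; false]).
split=> //; apply: shift_defect_1010 => //.
by rewrite (leq_trans le_c) ?fib_mono ?size_cat ?ltnS ?leq_addr.
Qed.

Definition reduce (u : seq bool) : seq bool :=
  if u is [:: true, false, true, false & s] then [:: false, false, false & s]
  else behead u.

Variable k : nat.
Hypotheses (k_gt0 : 0 < k) (le_c : c <= fib k).

Lemma reduceP u : fib_valid u -> size u = k.+3 ->
  [/\ fib_valid (reduce u), size (reduce u) = k.+2 & replaces u (reduce u)].
Proof.
have le_fibc n : k <= n -> c <= fib n by move=> /fib_mono; apply: leq_trans.
case: u => [|[] u] // vu [su]; last first.
  by move: vu; rewrite fib_valid_cons => /andP[_ vu]; split=> //; apply: replaces_drop0.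
case: u vu su => [|[] u] // vu [su]; first by move: vu; rewrite fib_valid_cons.
case: u vu su => [|[] u] // vu [su]; last first.
  move: vu; rewrite !fib_valid_cons /= => vu; split; rewrite /= ?su //.
  apply: (@replaces_trans _ (false :: u)); last exact: replaces_add0.
  by apply: (@replaces_cat00 [:: true]); apply: le_fibc; lia.
case: u vu su => [|[] s] vu su; first by move: k_gt0; rewrite -su.
  by move: vu; rewrite !fib_valid_cons.
move: vu su; rewrite !fib_valid_cons /= => vs ss.
split; rewrite /= -?ss ?fib_valid_cons ?vs //.
apply: (@replaces_trans _ s); first by apply: replaces_1010; apply: le_fibc; lia.
by do 2 apply: replaces_trans (@replaces_add0 _) _; apply: replaces_add0.
Qed.

(* A window is a valid word of length k + 2, stored as its value (< F_(k+4));
   the one extra value lets [inord] serve as the encoding. *)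
Definition fib_shift_state := (bool * 'I_(fib k.+4).+1)%type.
Definition encode (r : seq bool) : 'I_(fib k.+4).+1 := inord (fibval r).
Definition decode (i : 'I_(fib k.+4).+1) : seq bool := zeckendorf k.+2 i.

Definition fib_shift_init : fib_shift_state := (false, encode (nseq k.+2 false)).
Definition fib_shift_step (q : fib_shift_state) (b : bool) : fib_shift_state :=
  (q.1 (+) b, encode (reduce (rcons (decode q.2) b))).
Definition fib_shift_out (q : fib_shift_state) : bool := q.1 (+) shift_defect (decode q.2).

Lemma decode_encode r : fib_valid r -> size r = k.+2 -> decode (encode r) = r.
Proof.
move=> vr sr; have lt_r := fibval_lt vr; rewrite sr in lt_r.
rewrite /decode /encode inordK ?(ltn_trans lt_r) //.
have [vz sz val_z] := zeckendorfP lt_r.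
by apply: fibval_inj; rewrite ?sz ?sr.
Qed.

Lemma fib_shift_run w : fib_valid w ->
  exists2 r, foldl fib_shift_step fib_shift_init w = (odd (count id w), encode r)
           & [/\ fib_valid r, size r = k.+2 & replaces w r].
Proof.
elim/last_ind: w => [|w b IH] vwb.
  exists (nseq k.+2 false) => //.
  by split; rewrite ?size_nseq ?fib_valid_nseq0 //; apply: replaces_nil_nseq0.
have vw : fib_valid w by move: vwb; rewrite -cats1 => /fib_valid_catl.
have [r run_w [vr sr wr]] := IH vw.
have vrb : fib_valid (rcons r b) by move: vwb; rewrite -!cats1 => /wr[].
have srb : size (rcons r b) = k.+3 by rewrite size_rcons sr.
have [vr' sr' rr'] := reduceP vrb srb.
exists (reduce (rcons r b)).
  rewrite foldl_rcons run_w /fib_shift_step /= decode_encode //.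
  by rewrite -[rcons w b]cats1 count_cat /= addn0 oddD oddb.
by split=> //; apply: replaces_trans _ rr'; apply: replaces_rcons.
Qed.

Lemma fib_shift_generates :
  fib_dfao_generates fib_shift_init fib_shift_step fib_shift_out (fun i => t (i + c)).
Proof.
move=> w vw; have [r -> [vr sr wr]] := fib_shift_run vw.
have /wr[_] : fib_valid (w ++ [::]) by rewrite cats0.
rewrite !cats0 => defect_wr.
by rewrite /fib_shift_out /= decode_encode // -defect_wr /shift_defect addbC addbK.
Qed.

End Shift.

Lemma fib_index_linear c : exists k, [/\ 0 < k, c <= fib k & fib k.+4 <= 13 * c.+1].
Proof.
have ex_k : exists k, (0 < k) && (c <= fib k) by exists c.+1; rewrite leq_fibS.
case: (ex_minnP ex_k) => k /andP[k_gt0 le_c] min_k; exists k; split=> //.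
case: k k_gt0 le_c min_k => [|[|m]] // _ le_c min_k; first by have : fib 5 = 5 by []; lia.
have lt_c : fib m.+1 < c.
  by rewrite ltnNge; apply/negP => le_c'; have := min_k m.+1; rewrite le_c' ltnn => /(_ isT).
have := fibSS m.+4; have := fibSS m.+3; have := fibSS m.+2; have := fibSS m.+1.
have := fibSS m; have := fib_leS m; lia.
Qed.

Theorem theorem14 :
  exists K : nat,
    forall t : nat -> bool, is_fib_thue_morse t ->
    forall c : nat,
      exists (Q : finType) (q0 : Q) (d : Q -> bool -> Q) (out : Q -> bool),
        fib_dfao_generates q0 d out (fun i => t (i + c)) /\
        #|Q| <= K * c.+1.
Proof.
exists 28 => t tm c.
have [k [k_gt0 le_c le_fib]] := fib_index_linear c.
exists (fib_shift_state k), (fib_shift_init k), (@fib_shift_step k), (@fib_shift_out t c k).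
split; first exact: (@fib_shift_generates t c tm k k_gt0 le_c).
by rewrite card_prod card_bool card_ord; lia.
Qed.
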